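(* Let $\alpha>0$ and $s_{\min}>0$, and put $\mu_0=\dfrac{2\alpha+s_{\min}-\sqrt{s_{\min}^2+4\alpha s_{\min}}}{2\alpha}$ (so $\mu_0\in(0,1)$ and $\frac{(1-\mu_0)^2}{\mu_0}=\frac{s_{\min}}{\alpha}$). Let $X_1,\dots,X_m$ be independent random variables with $X_i\sim\operatorname{Ber}(p_i,s_i)$, where $p_i\in(0,1]$ and $0<s_i\le s_{\min}$, and suppose $\sum_{i=1}^m p_is_i\le \mu_0$. Then $B=\sum_{i=1}^m X_i$ satisfies $\mathbb{P}(B>1)\le\alpha$.
   Context: For $p\in[0,1]$ and $s>0$, $\operatorname{Ber}(p,s)$ denotes the scaled Bernoulli distribution: $X\sim\operatorname{Ber}(p,s)$ means $X=s$ with probability $p$ and $X=0$ with probability $1-p$. *)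

From HB Require Import structures.
From mathcomp Require Import all_boot all_order all_algebra.
From mathcomp Require Import all_classical all_reals all_analysis.
Set Implicit Arguments. Unset Strict Implicit. Unset Printing Implicit Defensive.
Import Order.TTheory GRing.Theory Num.Theory.
Local Open Scope classical_set_scope.
Local Open Scope ring_scope.

(* Mutual independence of a finite family of real random variables:
   for every family of measurable sets B_i, the joint event has probability
   equal to the product (taking B_i = setT yields every subfamily). *)
Definition mutually_independent (R : realType) (d : measure_display)
  (T : measurableType d) (P : probability T R) (m : nat)
  (X : 'I_m -> {RV P >-> R}) : Prop :=
  forall B : 'I_m -> set R, (forall i, measurable (B i)) ->
    P (\big[setI/setT]_(i < m) (X i @^-1` B i)) =
    (\prod_(i < m) P (X i @^-1` B i))%E.

Definition scaled_bernoulli (R : realType) (d : measure_display)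
  (T : measurableType d) (P : probability T R) (Y : {RV P >-> R}) (p s : R)
  : Prop :=
  P (Y @^-1` [set s]) = p%:E /\ P (Y @^-1` [set 0]) = (1 - p)%:E.

Definition mu0 (R : realType) (alpha smin : R) : R :=
  (2 * alpha + smin - Num.sqrt (smin ^+ 2 + 4 * alpha * smin)) / (2 * alpha).

(* Let A_i be the event {X_i = s_i} and Y = sum_i s_i 1_{A_i}.  Almost surely
   B = Y, and since the A_i are pairwise independent, Y has mean
   mu = sum_i p_i s_i and variance sum_i s_i^2 p_i (1 - p_i) <= s_min mu.
   Chebyshev's inequality at distance 1 - mu then bounds P(B > 1) by
   s_min mu / (1 - mu)^2, and mu0 is exactly the threshold below which this
   ratio is at most alpha. *)

From HB Require Import structures.
From mathcomp Require Import all_boot all_order all_algebra.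
From mathcomp Require Import all_classical all_reals all_analysis.
From mathcomp Require Import ring lra measurable_realfun.
Import Order.TTheory GRing.Theory Num.Theory.
Local Open Scope classical_set_scope.
Local Open Scope ring_scope.

Lemma le_mu0_ratio {R : realType} {a sm mu : R} : 0 < a -> 0 < sm -> 0 <= mu ->
  mu <= mu0 a sm -> mu < 1 /\ sm * mu <= a * (1 - mu) ^+ 2.
Proof.
move=> a_gt0 sm_gt0 mu_ge0; rewrite /mu0.
set S := Num.sqrt _.
have S_ge0 : 0 <= S by exact: sqrtr_ge0.
have SE : S ^+ 2 = sm ^+ 2 + 4 * a * sm by rewrite sqr_sqrtr //; nra.
have sm_ltS : sm < S.
  rewrite ltNge; apply/negP => S_le.
  have : S ^+ 2 <= sm ^+ 2 by rewrite ler_sqr ?nnegrE //; lra.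
  rewrite SE; nra.
rewrite ler_pdivlMr ?mulr_gt0 // => mu_le.
split; first nra.
(* [4 a (a (1 - x)^2 - sm x)] factors as [(2 a x0 - 2 a x) (2 a x1 - 2 a x)],
   where [x0 = mu0 a sm <= x1] are the roots of [a (1 - x)^2 = sm x]. *)
have : 0 <= (2 * a + sm - S - mu * (2 * a)) * (2 * a + sm + S - mu * (2 * a)).
  by apply: mulr_ge0; lra.
nra.
Qed.

Lemma sum_bernoulli_variance_le {R : realFieldType} {I : finType} {p s : I -> R}
    {smin : R} :
  (forall i, 0 <= p i <= 1) -> (forall i, 0 <= s i <= smin) ->
  \sum_i s i ^+ 2 * (p i - p i ^+ 2) <= smin * \sum_i p i * s i.
Proof.
move=> p01 s_bound; rewrite mulr_sumr; apply: ler_sum => i _.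
case/andP: (p01 i) => p_ge0 p_le1; case/andP: (s_bound i) => s_ge0 s_le.
have : 0 <= s i * p i * (smin - s i * (1 - p i)) by apply: mulr_ge0; nra.
nra.
Qed.

(* [eps^2 [b] <= (y - mean)^2] with the square expanded, so that both sides are
   nonnegative and their integrals split into integrals of nonnegative terms. *)
Lemma chebyshev_pointwise {R : realFieldType} (eps y mean : R) (b : bool) :
  0 <= eps -> (b -> eps <= `|y - mean|) ->
  eps ^+ 2 * b%:R + 2 * mean * y <= y ^+ 2 + mean ^+ 2.
Proof.
move=> eps_ge0 dev; suff : eps ^+ 2 * b%:R <= (y - mean) ^+ 2 by lra.
case: b dev => [/(_ isT) dev|_]; last by rewrite mulr0 sqr_ge0.
by rewrite mulr1 -[(y - mean) ^+ 2]real_normK ?num_real // ler_sqr ?nnegrE.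
Qed.

Section integral_indic.
Local Open Scope ereal_scope.
Context {d} {T : measurableType d} {R : realType} (mu : {measure set T -> \bar R}).

Lemma ge0_integralZ_indic (k : R) (A : set T) : (0 <= k)%R -> measurable A ->
  \int[mu]_w (k * \1_A w)%R%:E = k%:E * mu A.
Proof.
move=> k_ge0 mA; under eq_integral do rewrite EFinM.
rewrite ge0_integralZl ?lee_fin ?integral_indic ?setIT //.
by apply/measurable_EFinP; exact: measurable_indic.
Qed.

Lemma ge0_integral_indic_sum (I : Type) (r : seq I) (A : I -> set T)
    (c : I -> R) :
  (forall i, measurable (A i)) -> (forall i, (0 <= c i)%R) ->
  \int[mu]_w (\sum_(i <- r) c i * \1_(A i) w)%:E =
  \sum_(i <- r) (c i)%:E * mu (A i).
Proof.
move=> mA c_ge0; under eq_integral do rewrite -sumEFin.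
rewrite ge0_integral_sum // => [|i|i w _]; last by rewrite lee_fin mulr_ge0.
- by apply: eq_bigr => i _; exact: ge0_integralZ_indic.
- by apply/measurable_EFinP/measurable_funM => //; exact: measurable_indic.
Qed.

End integral_indic.

Section pairwise_independent_indicators.
Context {d} {T : measurableType d} {R : realType} {P : probability T R}.
Context {I : finType} {A : I -> set T} {c p : I -> R}.
Hypothesis mA : forall i, measurable (A i).
Hypothesis c_ge0 : forall i, 0 <= c i.
Hypothesis PA : forall i, P (A i) = (p i)%:E.
Hypothesis PAA : forall i j, i != j -> P (A i `&` A j) = (p i * p j)%:E.

Let p_ge0 i : 0 <= p i. Proof. by rewrite -lee_fin -PA. Qed.

Lemma integral_indic_sum_mean :
  (\int[P]_w (\sum_i c i * \1_(A i) w)%:E = (\sum_i c i * p i)%:E)%E.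
Proof.
rewrite ge0_integral_indic_sum // -sumEFin; apply: eq_bigr => i _.
by rewrite EFinM; congr (_ * _)%E; exact: PA.
Qed.

Lemma integral_indic_sum_sqr :
  (\int[P]_w ((\sum_i c i * \1_(A i) w) ^+ 2)%:E =
   ((\sum_i c i * p i) ^+ 2 + \sum_i c i ^+ 2 * (p i - p i ^+ 2))%:E)%E.
Proof.
have sqrE w : (\sum_i c i * \1_(A i) w) ^+ 2 =
    \sum_(ij : I * I) c ij.1 * c ij.2 * \1_(A ij.1 `&` A ij.2) w.
  rewrite expr2 mulr_suml -(pair_bigA _ (fun i j => c i * c j * \1_(A i `&` A j) w)).
  apply: eq_bigr => i _.
  by rewrite mulr_sumr; apply: eq_bigr => j _; rewrite indicI mulrACA.
under eq_integral do rewrite sqrE.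
rewrite ge0_integral_indic_sum => [|[i j]|[i j]] /=; last 2 first.
- exact: measurableI.
- exact: mulr_ge0.
rewrite -(pair_bigA _ (fun i j => (c i * c j)%:E * P (A i `&` A j))%E) /=.
have PAAE i j : P (A i `&` A j) = (p i * p j + (i == j)%:R * (p i - p i ^+ 2))%:E.
  by case: eqVneq => [<-|/PAA //]; rewrite ?mul0r ?addr0 // setIid PA mul1r subrKC.
under eq_bigr do under eq_bigr do rewrite PAAE -EFinM.
under eq_bigr do rewrite sumEFin.
rewrite sumEFin; congr (_ %:E).
rewrite expr2 mulr_suml -big_split /=; apply: eq_bigr => i _.
rewrite mulr_sumr (bigD1 i) //= [in RHS](bigD1 i) //= eqxx mul1r.
rewrite [RHS]addrAC; congr (_ + _); first ring.
apply: eq_bigr => j /negPf ji.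
by rewrite eq_sym ji mul0r addr0; ring.
Qed.

Lemma chebyshev_indic_sum (eps : R) (D : set T) : 0 <= eps -> measurable D ->
  {ae P, forall w, D w -> eps <= `|\sum_i c i * \1_(A i) w - \sum_i c i * p i|} ->
  ((eps ^+ 2)%:E * P D <= (\sum_i c i ^+ 2 * (p i - p i ^+ 2))%:E)%E.
Proof.
move=> eps_ge0 mD devD.
set Y := fun w => \sum_i c i * \1_(A i) w.
set mean := \sum_i c i * p i.
have mean_ge0 : 0 <= mean by apply: sumr_ge0 => i _; exact: mulr_ge0.
have Y_ge0 w : 0 <= Y w by apply: sumr_ge0 => i _; rewrite mulr_ge0 // indicE ler0n.
have mY : measurable_fun setT Y.
  by apply: measurable_sum => i; apply: measurable_funM => //;
    exact: measurable_indic.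
have int2Y : (\int[P]_w (2 * mean * Y w)%:E = (2 * mean * mean)%:E)%E.
  under eq_integral do rewrite EFinM.
  rewrite ge0_integralZl ?integral_indic_sum_mean ?lee_fin ?mulr_ge0 //.
  - exact: (measurable_EFinP _ _).2 mY.
  - by move=> w _; rewrite lee_fin.
have le_ae : {ae P, forall w, setT w ->
    ((eps ^+ 2 * \1_D w + 2 * mean * Y w)%:E <= (Y w ^+ 2 + mean ^+ 2)%:E)%E}.
  apply: filterS devD => w devDw _; rewrite lee_fin indicE.
  by apply: chebyshev_pointwise => // /set_mem; exact: devDw.
have mf1 : measurable_fun setT (fun w => (eps ^+ 2 * \1_D w + 2 * mean * Y w)%:E).
  by apply/measurable_EFinP/measurable_funD; apply: measurable_funM.
have mf2 : measurable_fun setT (fun w => (Y w ^+ 2 + mean ^+ 2)%:E).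
  by apply/measurable_EFinP/measurable_funD => //; exact: measurable_funX.
have : (\int[P]_w (eps ^+ 2 * \1_D w + 2 * mean * Y w)%:E <=
        \int[P]_w (Y w ^+ 2 + mean ^+ 2)%:E)%E.
  by apply: (ae_ge0_le_integral measurableT _ mf1 _ mf2 le_ae) => w _;
    rewrite lee_fin addr_ge0 ?mulr_ge0 ?sqr_ge0.
under eq_integral do rewrite EFinD.
under [X in (_ <= X)%E]eq_integral do rewrite EFinD.
rewrite !ge0_integralD //; try by move=> w _; rewrite lee_fin ?mulr_ge0 ?sqr_ge0.
all: try by apply/measurable_EFinP; repeat apply: measurable_funM.
rewrite ge0_integralZ_indic ?sqr_ge0 // int2Y integral_indic_sum_sqr integral_cst //.
rewrite [X in ((mean ^+ 2)%:E * X)%E]probability_setT mule1 -EFinD.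
have -> : (\sum_i c i * p i) ^+ 2 + \sum_i c i ^+ 2 * (p i - p i ^+ 2) + mean ^+ 2 =
    \sum_i c i ^+ 2 * (p i - p i ^+ 2) + 2 * mean * mean by rewrite /mean; ring.
by rewrite EFinD leeD2rE.
Qed.

End pairwise_independent_indicators.

Section random_variables.
Context {d} {T : measurableType d} {R : realType} {P : probability T R}.

Lemma mutually_independent_pair {m} {X : 'I_m -> {RV P >-> R}} {i j : 'I_m}
    {B C : set R} :
  mutually_independent X -> i != j -> measurable B -> measurable C ->
  P (X i @^-1` B `&` X j @^-1` C) = (P (X i @^-1` B) * P (X j @^-1` C))%E.
Proof.
move=> indX ij mB mC.
pose F k : set R := if k == i then B else if k == j then C else setT.
have mF k : measurable (F k) by rewrite /F; repeat case: ifP => _.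
have Fi : F i = B by rewrite /F eqxx.
have Fj : F j = C by rewrite /F eq_sym (negPf ij) eqxx.
have FT k : (k != i) && (k != j) -> X k @^-1` F k = setT.
  by case/andP => /negPf ki /negPf kj; rewrite /F ki kj.
have := indX F mF; rewrite (bigD1 i) // [in Z in _ = Z](bigD1 i) //= Fi.
rewrite (bigD1 j) 1?eq_sym // [in Z in _ = Z](bigD1 j) 1?eq_sym //= Fj.
rewrite big1 ?big1 => [|k /FT ->|k /FT ->] //; last exact: probability_setT.
by rewrite setIT mule1.
Qed.

Lemma scaled_bernoulli_ae {X : {RV P >-> R}} {p s : R} :
  scaled_bernoulli X p s -> s != 0 ->
  {ae P, forall w, X w = s * \1_(X @^-1` [set s]) w}.
Proof.
move=> [PXs PX0] s_neq0.
have mX0 : measurable (X @^-1` [set 0]) by exact: measurable_funPTI.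
have mXs : measurable (X @^-1` [set s]) by exact: measurable_funPTI.
have PXU : P (X @^-1` [set 0] `|` X @^-1` [set s]) = 1%E.
  transitivity (P (X @^-1` [set 0%R]) + P (X @^-1` [set s]))%E.
    apply: measureU => //; apply/seteqP; split => w // [/= -> s0].
    by move: s_neq0; rewrite -s0 eqxx.
  by rewrite PX0 PXs -EFinD subrK.
exists (~` (X @^-1` [set 0] `|` X @^-1` [set s])); split.
- exact/measurableC/measurableU.
- by rewrite probability_setC ?PXU ?subee //; exact: measurableU.
move=> w /= Xw [Xw0|Xws]; apply: Xw.
- rewrite Xw0 indicE memNset ?mulr0 //= => Xws.
  by move: s_neq0; rewrite -Xws Xw0 eqxx.
- by rewrite indicE mem_set ?mulr1.
Qed.

Lemma sum_scaled_bernoulli_ae {I : finType} {X : I -> {RV P >-> R}} {p s : I -> R} :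
  (forall i, scaled_bernoulli (X i) (p i) (s i)) -> (forall i, s i != 0) ->
  {ae P, forall w, \sum_i X i w = \sum_i s i * \1_(X i @^-1` [set s i]) w}.
Proof.
move=> berX s_neq0.
have Xae : {ae P, forall w, forall i, X i w = s i * \1_(X i @^-1` [set s i]) w}.
  by apply: filter_forall => i; exact: scaled_bernoulli_ae.
by apply: filterS Xae => w Xw; apply: eq_bigr => i _.
Qed.

Lemma measurable_sum_gt {I : Type} (r : seq I) (X : I -> {RV P >-> R}) (a : R) :
  measurable [set w | a < \sum_(i <- r) X i w].
Proof.
pose B w := \sum_(i <- r) X i w.
have mB : measurable_fun setT B.
  by apply: measurable_sum => i; exact: measurable_funP.
rewrite -[Z in measurable Z]setTI (_ : [set w | _] = B @^-1` `]a, +oo[).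
  by apply: mB => //; exact: measurable_itv.
by apply/seteqP; split => w /=; rewrite in_itv /= andbT.
Qed.

End random_variables.

Theorem mainTheorem1 (R : realType) (d : measure_display) (T : measurableType d)
  (P : probability T R) (alpha smin : R) (m : nat)
  (X : 'I_m -> {RV P >-> R}) (p s : 'I_m -> R) :
  0 < alpha -> 0 < smin ->
  mutually_independent X ->
  (forall i, 0 < p i <= 1) ->
  (forall i, 0 < s i <= smin) ->
  (forall i, scaled_bernoulli (X i) (p i) (s i)) ->
  \sum_(i < m) p i * s i <= mu0 alpha smin ->
  (P [set w | (1 < \sum_(i < m) X i w)%R] <= alpha%:E)%E.
Proof.
move=> alpha_gt0 smin_gt0 indX p01 s_bound berX le_mu.
have p01W i : 0 <= p i <= 1 by case/andP: (p01 i) => /ltW ->.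
have s_boundW i : 0 <= s i <= smin by case/andP: (s_bound i) => /ltW ->.
have p_ge0 i : 0 <= p i by case/andP: (p01W i).
have s_ge0 i : 0 <= s i by case/andP: (s_boundW i).
set mu := \sum_(i < m) p i * s i.
have mu_ge0 : 0 <= mu by apply: sumr_ge0 => i _; exact: mulr_ge0.
have [mu_lt1 smin_mu] := le_mu0_ratio alpha_gt0 smin_gt0 mu_ge0 le_mu.
pose A i := X i @^-1` [set s i].
have mA i : measurable (A i) by exact: measurable_funPTI.
have PA i : P (A i) = (p i)%:E by case: (berX i).
have PAA i j : i != j -> P (A i `&` A j) = (p i * p j)%:E.
  by move=> ij; rewrite EFinM -!PA; exact: mutually_independent_pair.
have dev : {ae P, forall w, 1 < \sum_(i < m) X i w ->
    1 - mu <= `|\sum_(i < m) s i * \1_(A i) w - \sum_(i < m) s i * p i|}.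
  have s_neq0 i : s i != 0 by case/andP: (s_bound i) => /gt_eqF ->.
  apply: filterS (sum_scaled_bernoulli_ae berX s_neq0) => w -> B_gt1.
  have -> : \sum_(i < m) s i * p i = mu by apply: eq_bigr => i _; exact: mulrC.
  by rewrite ler_normr (_ : 1 - mu <= _) //; lra.
have := chebyshev_indic_sum mA s_ge0 PA PAA _ _ _ (measurable_sum_gt _ _ _) dev.
have := sum_bernoulli_variance_le p01W s_boundW.
rewrite -/mu subr_ge0 (ltW mu_lt1) => var_le /(_ isT) cheb.
rewrite -(@lee_pmul2l _ ((1 - mu) ^+ 2)%:E) ?lte_fin ?exprn_gt0 ?subr_gt0 //.
by apply: (le_trans cheb); rewrite -EFinM lee_fin; lra.
Qed.
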